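(* For every $\mathbf{h},\mathbf{k}\in\mathbb{N}^n$, letting $t:=|\mathbf{h}+\mathbf{k}|=\deg(\mathbf{x}^{\mathbf{h}}(1-\mathbf{x})^{\mathbf{k}})$, one has $1-\mathbf{x}^{\mathbf{h}}(1-\mathbf{x})^{\mathbf{k}}+C'_t\in M_{2\lceil t/2\rceil}(g_1,\dots,g_n)$, where $g_i:=x_i(1-x_i)$.
   Context: $\mathbf{x}=(x_1,\dots,x_n)$, $\mathbf{x}^{\mathbf{h}}(1-\mathbf{x})^{\mathbf{k}}:=\prod_{i=1}^n x_i^{h_i}(1-x_i)^{k_i}$, $|\mathbf{a}|=\sum_i a_i$. $\Sigma[\mathbf{x}]$ denotes sums of squares of real polynomials; the $r$-truncated quadratic module is $M_r(g_1,\dots,g_n):=\{\sigma_0+\sum_{i=1}^n\sigma_i g_i:\ \sigma_i\in\Sigma[\mathbf{x}],\ \deg\sigma_0\le r,\ \deg(\sigma_i g_i)\le r\}$. For each positive integer $j$, $C_j\le 1$ denotes a constant such that $\prod_{i=1}^j x_i+C_j\in M_{2\lceil j/2\rceil}(g_1,\dots,g_j)$ (in the $j$ variables $x_1,\dots,x_j$), with $C_1:=0$; such constants exist. Then $C'_t:=\sum_{j=1}^t C_j$. *)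

From HB Require Import structures.
From mathcomp Require Import all_boot all_order all_algebra.
From mathcomp Require Import reals.
From mathcomp Require Import mpoly.
Set Implicit Arguments. Unset Strict Implicit. Unset Printing Implicit Defensive.
Import Order.TTheory GRing.Theory Num.Theory.
Local Open Scope ring_scope.

Definition sos (R : realType) (n : nat) (p : {mpoly R[n]}) : Prop :=
  exists s : seq {mpoly R[n]}, p = \sum_(q <- s) q ^+ 2.

(* degree bound: deg p <= r  (msize p = 1 + total degree, msize 0 = 0) *)
Definition deg_le (R : realType) (n : nat) (p : {mpoly R[n]}) (r : nat) : Prop :=
  (msize p <= r.+1)%N.

Definition trunc_qmodule (R : realType) (n r : nat) (g : 'I_n -> {mpoly R[n]})
    (p : {mpoly R[n]}) : Prop :=
  exists (s0 : {mpoly R[n]}) (s : 'I_n -> {mpoly R[n]}),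
    [/\ sos s0, (forall i, sos (s i)), deg_le s0 r,
        (forall i, deg_le (s i * g i) r) &
        p = s0 + \sum_(i < n) s i * g i].

Definition gbox (R : realType) (n : nat) (i : 'I_n) : {mpoly R[n]} :=
  'X_i * (1 - 'X_i).

Definition xhk (R : realType) (n : nat) (h k : 'I_n -> nat) : {mpoly R[n]} :=
  \prod_(i < n) ('X_i ^+ h i * (1 - 'X_i) ^+ k i).

Definition two_ceil_half (t : nat) : nat := (2 * ((t + 1) %/ 2))%N.

Definition good_const (R : realType) (C : nat -> R) : Prop :=
  C 1%N = 0 /\
  forall j : nat, (0 < j)%N ->
    C j <= 1 /\
    trunc_qmodule (two_ceil_half j) (@gbox R j)
      (\prod_(i < j) 'X_i + (C j)%:MP).

Definition Cprime (R : realType) (C : nat -> R) (t : nat) : R :=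
  \sum_(1 <= j < t.+1) C j.

From HB Require Import structures.
From mathcomp Require Import all_boot all_order all_algebra.
From mathcomp Require Import reals.
From mathcomp Require Import mpoly.
From mathcomp Require Import zify ring.

Set Implicit Arguments.
Unset Strict Implicit.
Unset Printing Implicit Defensive.
Import Order.TTheory GRing.Theory Num.Theory.
Local Open Scope ring_scope.

(* Write x^h (1-x)^k as a product y_1 ... y_t of factors y = x_i or
   y = 1 - x_i. Telescoping,
     1 - y_1 ... y_t = sum_(j = 1..t) y_1 ... y_(j-1) (1 - y_j),
   and the j-th summand plus C_j is the image of x_1 ... x_j + C_j under the
   substitution x_l |-> y_l (l < j), x_j |-> 1 - y_j. This substitution is
   affine, so it preserves degree bounds and sums of squares, and it maps each
   generator x_l (1 - x_l) to some g_i, because y (1 - y) = x_i (1 - x_i) for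
   both kinds of factor. Hence it maps M_r(g_1, ..., g_j) into
   M_r(g_1, ..., g_n), and summing over j gives the claim. *)

Section DegreeBound.

Variables (R : realType) (n : nat).
Implicit Types (p q : {mpoly R[n]}) (r : nat).

Lemma deg_le0 r : deg_le (0 : {mpoly R[n]}) r.
Proof. by rewrite /deg_le msize0. Qed.

Lemma deg_leW p r r' : (r <= r')%N -> deg_le p r -> deg_le p r'.
Proof. by rewrite /deg_le => le_rr' /leq_trans; apply. Qed.

Lemma deg_leD p q r : deg_le p r -> deg_le q r -> deg_le (p + q) r.
Proof.
rewrite /deg_le => hp hq; apply: leq_trans (msizeD_le _ _) _.
by rewrite geq_max hp hq.
Qed.

Lemma deg_leN p r : deg_le p r -> deg_le (- p) r.
Proof. by rewrite /deg_le msizeN. Qed.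

Lemma deg_leZ p c r : deg_le p r -> deg_le (c *: p) r.
Proof. by rewrite /deg_le; apply: leq_trans (msizeZ_le _ _). Qed.

Lemma deg_leM p q a b : deg_le p a -> deg_le q b -> deg_le (p * q) (a + b).
Proof.
rewrite /deg_le => hp hq.
have [->|nz_p] := eqVneq p 0; first by rewrite mul0r msize0.
have [->|nz_q] := eqVneq q 0; first by rewrite mulr0 msize0.
rewrite msizeM //.
move: hp hq; case: (msize p) => [|mp]; case: (msize q) => [|mq] //=; lia.
Qed.

Lemma deg_leX p e : deg_le p 1 -> deg_le (p ^+ e) e.
Proof.
move=> hp; elim: e => [|e IH]; first by rewrite expr0 /deg_le msize1.
by rewrite exprS -add1n; apply: deg_leM.
Qed.

Lemma deg_le_sum (I : Type) (s : seq I) (P : pred I) (F : I -> {mpoly R[n]}) r :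
  (forall i, P i -> deg_le (F i) r) -> deg_le (\sum_(i <- s | P i) F i) r.
Proof.
move=> hF; apply: (big_ind (fun p => deg_le p r)) => //.
  exact: deg_le0.
by move=> p q; apply: deg_leD.
Qed.

Lemma deg_le_prod j (d : 'I_j -> nat) (F : 'I_j -> {mpoly R[n]}) :
  (forall i, deg_le (F i) (d i)) ->
  deg_le (\prod_(i < j) F i) (\sum_(i < j) d i).
Proof.
move=> hF; elim/big_rec2: _ => [|i a p _ hp]; first by rewrite /deg_le msize1.
exact: deg_leM.
Qed.

End DegreeBound.

Lemma deg_le_comp (R : realType) j n (lq : j.-tuple {mpoly R[n]})
    (p : {mpoly R[j]}) r :
  (forall i, deg_le (tnth lq i) 1) -> deg_le p r -> deg_le (p \mPo lq) r.
Proof.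
move=> hlq hp; rewrite comp_mpolyE big_seq.
apply: deg_le_sum => m m_supp; apply: deg_leZ.
have le_m_r : (mdeg m <= r)%N.
  by have := msize_mdeg_lt m_supp; rewrite /deg_le in hp; lia.
apply: deg_leW le_m_r _; rewrite mdegE.
by apply: deg_le_prod => i; apply: deg_leX.
Qed.

Lemma sos0 (R : realType) n : sos (0 : {mpoly R[n]}).
Proof. by exists [::]; rewrite big_nil. Qed.

Lemma sosD (R : realType) n (p q : {mpoly R[n]}) :
  sos p -> sos q -> sos (p + q).
Proof. by move=> [s ->] [s' ->]; exists (s ++ s'); rewrite big_cat. Qed.

Lemma sos_comp (R : realType) j n (lq : j.-tuple {mpoly R[n]})
    (p : {mpoly R[j]}) :
  sos p -> sos (p \mPo lq).
Proof.
move=> [s ->]; exists (map (comp_mpoly lq) s).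
by rewrite rmorph_sum big_map; apply: eq_bigr => q _; rewrite rmorphXn.
Qed.

Section TruncatedQuadraticModule.

Variables (R : realType) (n : nat) (g : 'I_n -> {mpoly R[n]}).
Implicit Types (p q : {mpoly R[n]}) (r : nat).

Lemma trunc_qmodule0 r : trunc_qmodule r g 0.
Proof.
exists 0, (fun=> 0); split.
- exact: sos0.
- by move=> i; apply: sos0.
- exact: deg_le0.
- by move=> i; rewrite mul0r; apply: deg_le0.
- by rewrite big1 ?addr0 // => i _; rewrite mul0r.
Qed.

Lemma trunc_qmoduleW r r' p :
  (r <= r')%N -> trunc_qmodule r g p -> trunc_qmodule r' g p.
Proof.
move=> le_rr' [s0 [s [sos_s0 sos_s deg_s0 deg_s ->]]].
by exists s0, s; split => // [|i]; apply: deg_leW le_rr' _.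
Qed.

Lemma trunc_qmoduleD r p q :
  trunc_qmodule r g p -> trunc_qmodule r g q -> trunc_qmodule r g (p + q).
Proof.
move=> [s0 [s [sos_s0 sos_s deg_s0 deg_s ->]]].
move=> [s0' [s' [sos_s0' sos_s' deg_s0' deg_s' ->]]].
exists (s0 + s0'), (fun i => s i + s' i); split.
- exact: sosD.
- by move=> i; apply: sosD.
- exact: deg_leD.
- by move=> i; rewrite mulrDl; apply: deg_leD.
- under [X in _ = _ + X]eq_bigr do rewrite mulrDl.
  by rewrite big_split /=; ring.
Qed.

Lemma trunc_qmodule_sum r (I : Type) (s : seq I) (P : pred I)
    (F : I -> {mpoly R[n]}) :
  (forall i, P i -> trunc_qmodule r g (F i)) ->
  trunc_qmodule r g (\sum_(i <- s | P i) F i).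
Proof.
move=> hF; apply: (big_ind (trunc_qmodule r g)) => //.
  exact: trunc_qmodule0.
by move=> p q; apply: trunc_qmoduleD.
Qed.

Lemma trunc_qmodule_sos r p : sos p -> deg_le p r -> trunc_qmodule r g p.
Proof.
move=> sos_p deg_p; exists p, (fun=> 0); split => //.
- by move=> i; apply: sos0.
- by move=> i; rewrite mul0r; apply: deg_le0.
- by rewrite big1 ?addr0 // => i _; rewrite mul0r.
Qed.

Lemma trunc_qmodule_sos_mul r p a :
  sos p -> deg_le (p * g a) r -> trunc_qmodule r g (p * g a).
Proof.
move=> sos_p deg_pg; exists 0, (fun i => if i == a then p else 0); split.
- exact: sos0.
- by move=> i; case: eqP => _ //; apply: sos0.
- exact: deg_le0.
- by move=> i; case: eqP => [->|_] //; rewrite mul0r; apply: deg_le0.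
- rewrite add0r (bigD1 a) //= eqxx big1 ?addr0 // => i /negPf ->.
  by rewrite mul0r.
Qed.

End TruncatedQuadraticModule.

Lemma trunc_qmodule_comp (R : realType) j n r (g' : 'I_j -> {mpoly R[j]})
    (g : 'I_n -> {mpoly R[n]}) (lq : j.-tuple {mpoly R[n]})
    (sigma : 'I_j -> 'I_n)
    (p : {mpoly R[j]}) :
  (forall i, deg_le (tnth lq i) 1) -> (forall i, g' i \mPo lq = g (sigma i)) ->
  trunc_qmodule r g' p -> trunc_qmodule r g (p \mPo lq).
Proof.
move=> deg_lq comp_g [s0 [s [sos_s0 sos_s deg_s0 deg_s ->]]].
rewrite rmorphD rmorph_sum /=; apply: trunc_qmoduleD.
  by apply: trunc_qmodule_sos; [apply: sos_comp | apply: deg_le_comp].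
apply: trunc_qmodule_sum => i _; rewrite rmorphM /= comp_g.
apply: trunc_qmodule_sos_mul; first exact: sos_comp.
by rewrite -comp_g -rmorphM; apply: deg_le_comp.
Qed.

Lemma leq_two_ceil_half a b :
  (a <= b)%N -> (two_ceil_half a <= two_ceil_half b)%N.
Proof.
move=> le_ab; rewrite /two_ceil_half leq_mul2l /=; apply: leq_div2r.
by rewrite leq_add2r.
Qed.

Section BoxFactors.

Variables (R : realType) (n : nat).

Definition box_factor (q : 'I_n * bool) : {mpoly R[n]} :=
  if q.2 then 1 - 'X_q.1 else 'X_q.1.

Lemma deg_le_box_factor q : deg_le (box_factor q) 1.
Proof.
have deg_X : deg_le ('X_q.1 : {mpoly R[n]}) 1 by rewrite /deg_le msizeX mdeg1.
rewrite /box_factor; case: q.2 => //.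
by apply: deg_leD; [rewrite /deg_le msize1 | apply: deg_leN].
Qed.

Lemma box_factor_negb i b : box_factor (i, ~~ b) = 1 - box_factor (i, b).
Proof. by rewrite /box_factor; case: b => //=; rewrite opprB addrC subrK. Qed.

Lemma box_factor_mul_compl q : box_factor q * (1 - box_factor q) = gbox R q.1.
Proof.
by rewrite /box_factor /gbox; case: q.2 => //; rewrite mulrC opprB addrC subrK.
Qed.

Lemma good_const_box_factors (C : nat -> R) (u : seq ('I_n * bool)) :
  good_const C -> (0 < size u)%N ->
  trunc_qmodule (two_ceil_half (size u)) (@gbox R n)
    (\prod_(q <- u) box_factor q + (C (size u))%:MP).
Proof.
move=> [_ goodC] u_gt0; have [_ hypC] := goodC _ u_gt0.
pose lq := [tuple of map box_factor (in_tuple u)].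
have comp_X i : 'X_i \mPo lq = box_factor (tnth (in_tuple u) i).
  by rewrite comp_mpolyXU -(tnth_nth 0) tnth_map.
have := trunc_qmodule_comp (lq := lq)
  (sigma := fun i => (tnth (in_tuple u) i).1) _ _ hypC.
rewrite rmorphD rmorph_prod /= comp_mpolyC (eq_bigr _ (fun i _ => comp_X i)).
rewrite -(big_tuple _ _ (in_tuple u) predT box_factor).
apply=> i; first by rewrite tnth_map; apply: deg_le_box_factor.
by rewrite -box_factor_mul_compl /gbox rmorphM rmorphB rmorph1 /= comp_X.
Qed.

Lemma trunc_qmodule_one_sub_box_factors (C : nat -> R) (u : seq ('I_n * bool)) :
  good_const C ->
  trunc_qmodule (two_ceil_half (size u)) (@gbox R n)
    (1 - \prod_(q <- u) box_factor q + (Cprime C (size u))%:MP).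
Proof.
move=> goodC; elim: u => [|[i b] u IH].
  by rewrite big_nil /Cprime big_geq // subrr addr0; apply: trunc_qmodule0.
set P := \prod_(q <- u) box_factor q.
have telescope : 1 - \prod_(q <- (i, b) :: u) box_factor q
    + (Cprime C (size ((i, b) :: u)))%:MP =
  (1 - P + (Cprime C (size u))%:MP) +
  (P * box_factor (i, ~~ b) + (C (size u).+1)%:MP).
  rewrite big_cons -/P box_factor_negb /Cprime big_nat_recr //= mpolyCD.
  by ring.
rewrite telescope; apply: trunc_qmoduleD.
  exact: trunc_qmoduleW (leq_two_ceil_half (leqnSn _)) IH.
have := good_const_box_factors (u := rcons u (i, ~~ b)) goodC.
by rewrite size_rcons -cats1 big_cat big_seq1; apply.
Qed.

Lemma xhk_box_factors (h k : 'I_n -> nat) :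
  exists u : seq ('I_n * bool),
    \prod_(q <- u) box_factor q = xhk R h k /\
    size u = (\sum_(i < n) (h i + k i))%N.
Proof.
rewrite /xhk; elim: (index_enum _) => [|i s [u [prod_u size_u]]].
  by exists [::]; rewrite !big_nil.
exists (nseq (h i) (i, false) ++ nseq (k i) (i, true) ++ u).
rewrite !big_cons !big_cat !size_cat !size_nseq prod_u size_u /=.
rewrite !big_nseq !iter_mulr_1 /box_factor /= mulrA.
by split; rewrite ?addnA.
Qed.

End BoxFactors.

Theorem lemma3 (R : realType) (C : nat -> R) (n : nat) (h k : 'I_n -> nat) :
  good_const C ->
  let t := (\sum_(i < n) (h i + k i))%N in
  trunc_qmodule (two_ceil_half t) (@gbox R n)
    (1 - @xhk R n h k + (Cprime C t)%:MP).
Proof.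
move=> goodC t; have [u [<- size_u]] := @xhk_box_factors R n h k.
by rewrite /t -size_u; apply: trunc_qmodule_one_sub_box_factors.
Qed.
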